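(* For all $x\in[0,1]$, $$\arcsin x \le \frac{\frac{\pi}{\pi-2}\,x}{\frac{2}{\pi-2}+\sqrt{1-x^2}},$$ with equality at both endpoints $x=0$ and $x=1$. *)

From Stdlib Require Import Reals.

From Stdlib Require Import Reals Lra.
From Coquelicot Require Import Coquelicot.
Open Scope R_scope.

(* Put x = sin t with t in [0, pi/2]; the inequality becomes gap t >= 0 for
   gap t = pi sin t / (2 + (pi - 2) cos t) - t, which vanishes at 0 and pi/2.
   Its derivative is (1 - cos t) / (2 + (pi - 2) cos t)^2 times
   (pi - 2)^2 cos t - (4 + 2 pi - pi^2), a decreasing function of t: so gap
   first increases and then decreases, and never drops below its values at
   the endpoints. *)

Lemma derive_nonneg_le (f f' : R -> R) (a b : R) :
  a <= b ->
  (forall c, a <= c <= b -> derivable_pt_lim f c (f' c)) ->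
  (forall c, a <= c <= b -> 0 <= f' c) ->
  f a <= f b.
Proof.
  intros Hab Hd Hpos.
  destruct (Req_dec a b) as [<-|Hne]; [lra|].
  destruct (MVT_cor3 f f' a b) as (c & Hac & Hcb & Hfb);
    [lra | intros; apply Hd; lra |].
  pose proof (Hpos c (conj Hac Hcb)). nra.
Qed.

Lemma derive_nonpos_ge (f f' : R -> R) (a b : R) :
  a <= b ->
  (forall c, a <= c <= b -> derivable_pt_lim f c (f' c)) ->
  (forall c, a <= c <= b -> f' c <= 0) ->
  f b <= f a.
Proof.
  intros Hab Hd Hneg.
  destruct (Req_dec a b) as [<-|Hne]; [lra|].
  destruct (MVT_cor3 f f' a b) as (c & Hac & Hcb & Hfb);
    [lra | intros; apply Hd; lra |].
  pose proof (Hneg c (conj Hac Hcb)). nra.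
Qed.

Section SignChangeOfDerivative.

Variables (f f' g : R -> R) (a b : R).

Hypothesis f_derive : forall t, a <= t <= b -> derivable_pt_lim f t (f' t).
Hypothesis g_nonincreasing : forall s t, a <= s -> s <= t -> t <= b -> g t <= g s.
Hypothesis derive_nonneg : forall t, a <= t <= b -> 0 <= g t -> 0 <= f' t.
Hypothesis derive_nonpos : forall t, a <= t <= b -> g t <= 0 -> f' t <= 0.

Lemma Rmin_endpoints_le t : a <= t <= b -> Rmin (f a) (f b) <= f t.
Proof.
  intros Ht.
  destruct (Rle_dec 0 (g t)) as [Hg|Hg].
  - apply Rle_trans with (f a); [apply Rmin_l|].
    apply (derive_nonneg_le f f'); [lra | intros; apply f_derive; lra |].
    intros c Hc. apply derive_nonneg; [lra|].
    apply Rle_trans with (g t); [exact Hg | apply g_nonincreasing; lra].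
  - apply Rle_trans with (f b); [apply Rmin_r|].
    apply (derive_nonpos_ge f f'); [lra | intros; apply f_derive; lra |].
    intros c Hc. apply derive_nonpos; [lra|].
    apply Rle_trans with (g t); [apply g_nonincreasing; lra | lra].
Qed.

End SignChangeOfDerivative.

Lemma PI_gt_2 : 2 < PI.
Proof. pose proof PI2_1. lra. Qed.

Lemma cos_nonneg_0_PI2 t : 0 <= t <= PI / 2 -> 0 <= cos t.
Proof. intros Ht. apply cos_ge_0; lra. Qed.

Lemma gap_denom_pos c : 0 <= c -> 0 < 2 + (PI - 2) * c.
Proof. intros Hc. pose proof PI_gt_2. nra. Qed.

Definition gap (t : R) : R := PI * sin t / (2 + (PI - 2) * cos t) - t.

Definition gap_sign (t : R) : R := (PI - 2) ^ 2 * cos t - (4 + 2 * PI - PI ^ 2).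

Definition gap_derivative (t : R) : R :=
  (1 - cos t) / (2 + (PI - 2) * cos t) ^ 2 * gap_sign t.

Lemma gap_derive t : 0 <= cos t -> derivable_pt_lim gap t (gap_derivative t).
Proof.
  intros Hc. pose proof (gap_denom_pos _ Hc).
  apply is_derive_Reals. unfold gap, gap_derivative, gap_sign.
  auto_derive; [lra|].
  pose proof (sin2 t) as Hsin2. unfold Rsqr in Hsin2.
  field_simplify_eq; [|lra].
  replace (sin t ^ 2) with (1 - cos t ^ 2) by (simpl; lra). ring.
Qed.

Lemma gap_sign_nonincreasing s t :
  0 <= s -> s <= t -> t <= PI / 2 -> gap_sign t <= gap_sign s.
Proof.
  intros Hs Hst Ht. unfold gap_sign.
  assert (cos t <= cos s) by (apply cos_decr_1; lra).
  assert ((PI - 2) ^ 2 * cos t <= (PI - 2) ^ 2 * cos s)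
    by (apply Rmult_le_compat_l; [apply pow2_ge_0 | assumption]).
  lra.
Qed.

Lemma gap_derive_factor_nonneg t :
  0 <= cos t -> 0 <= (1 - cos t) / (2 + (PI - 2) * cos t) ^ 2.
Proof.
  intros Hc. pose proof (gap_denom_pos _ Hc). pose proof (COS_bound t).
  apply Rmult_le_pos; [lra|].
  apply Rlt_le, Rinv_0_lt_compat, pow_lt. lra.
Qed.

Lemma gap_0 : gap 0 = 0.
Proof. unfold gap. rewrite sin_0, cos_0. field. pose proof PI_gt_2. lra. Qed.

Lemma gap_PI2 : gap (PI / 2) = 0.
Proof. unfold gap. rewrite sin_PI2, cos_PI2. field. Qed.

Lemma gap_nonneg t : 0 <= t <= PI / 2 -> 0 <= gap t.
Proof.
  intros Ht.
  assert (Hmin : Rmin (gap 0) (gap (PI / 2)) <= gap t).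
  { apply (Rmin_endpoints_le gap gap_derivative gap_sign);
      [| exact gap_sign_nonincreasing | | | exact Ht];
      intros s Hs; pose proof (cos_nonneg_0_PI2 s Hs) as Hc.
    - exact (gap_derive s Hc).
    - intros Hg. apply Rmult_le_pos; [apply gap_derive_factor_nonneg |]; assumption.
    - intros Hg. apply Rmult_le_0_l; [apply gap_derive_factor_nonneg |]; assumption. }
  rewrite gap_0, gap_PI2, Rmin_left in Hmin; lra.
Qed.

Lemma asin_0_PI2 x : 0 <= x <= 1 -> 0 <= asin x <= PI / 2.
Proof.
  intros Hx. pose proof (asin_bound x).
  split; [|lra].
  destruct (Rle_dec 0 (asin x)) as [Hpos|Hneg]; [exact Hpos|].
  assert (sin (asin x) < 0) by (apply sin_lt_0_var; lra).
  rewrite sin_asin in *; lra.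
Qed.

Lemma asin_le_sin_ratio x :
  0 <= x <= 1 -> asin x <= PI * x / (2 + (PI - 2) * sqrt (1 - x ^ 2)).
Proof.
  intros Hx.
  pose proof (asin_0_PI2 x Hx) as Ht.
  assert (Hcos : cos (asin x) = sqrt (1 - x ^ 2)).
  { rewrite cos_asin by lra. unfold Rsqr. f_equal. ring. }
  pose proof (gap_nonneg _ Ht) as Hgap.
  unfold gap in Hgap. rewrite sin_asin, Hcos in Hgap by lra.
  lra.
Qed.

Theorem mainTheorem1 :
  (forall x : R, 0 <= x <= 1 ->
     asin x <= (PI / (PI - 2) * x) / (2 / (PI - 2) + sqrt (1 - x ^ 2)))
  /\ asin 0 = (PI / (PI - 2) * 0) / (2 / (PI - 2) + sqrt (1 - 0 ^ 2))
  /\ asin 1 = (PI / (PI - 2) * 1) / (2 / (PI - 2) + sqrt (1 - 1 ^ 2)).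
Proof.
  pose proof PI_gt_2.
  split; [|split].
  - intros x Hx.
    pose proof (gap_denom_pos _ (sqrt_pos (1 - x ^ 2))).
    replace (PI / (PI - 2) * x / (2 / (PI - 2) + sqrt (1 - x ^ 2)))
      with (PI * x / (2 + (PI - 2) * sqrt (1 - x ^ 2))) by (field; split; lra).
    exact (asin_le_sin_ratio x Hx).
  - rewrite asin_0. unfold Rdiv. ring.
  - rewrite asin_1. replace (1 - 1 ^ 2) with 0 by ring. rewrite sqrt_0.
    field. lra.
Qed.
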